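(* Let $q\in(0,1]$. Then $\mathrm{F\o l}^{\mathrm{inn}}(R(SO_q(3)))=1-q^4$ and $\mathrm{F\o l}(R(SO_q(3)))=q^{-4}-q^4$.
   Context: $R(SO_q(3))$ is the fusion algebra with irreducible objects $I=\mathbb{Z}_+$, unit $0$, trivial involution, product $m\cdot n=\sum_{k=|m-n|}^{m+n}k$ (all integers in that range), and dimension $d(n)=[2n+1]_q$, where $[x]_q=\frac{q^{-x}-q^x}{q^{-1}-q}$ for $0<q<1$ and $[x]_1=x$. $\mathrm{supp}(r)$ is the set of elements of $I$ with nonzero coefficient in $r$. For $A\subseteq I$, $|A|=\sum_{\beta\in A}d(\beta)^2$, $A^c=I\setminus A$. A finite generating set is a finite $X\subseteq I$ such that every element of $I$ lies in $\mathrm{supp}$ of some product of elements of $X$. For finite $X,A$: $\partial_X(A)=\{\beta\in A:\exists x\in X,\ \mathrm{supp}(\beta x)\not\subseteq A\}\cup\{\beta\in A^c:\exists x\in X,\ \mathrm{supp}(\beta x)\not\subseteq A^c\}$, $\partial^{\mathrm{inn}}_X(A)=\{\beta\in A:\exists x\in X,\ \mathrm{supp}(\beta x)\not\subseteq A\}$. $\mathrm{F\o l}_X=\inf_A|\partial_XA|/|A|$, $\mathrm{F\o l}^{\mathrm{inn}}_X=\inf_A|\partial^{\mathrm{inn}}_XA|/|A|$ over nonempty finite $A$; $\mathrm{F\o l}$ and $\mathrm{F\o l}^{\mathrm{inn}}$ are their infima over finite generating sets $X$. *)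

From HB Require Import structures.
From mathcomp Require Import all_boot all_order all_algebra.
From mathcomp Require Import all_classical all_reals.
Set Implicit Arguments. Unset Strict Implicit. Unset Printing Implicit Defensive.
Import Order.TTheory GRing.Theory Num.Theory.
Local Open Scope classical_set_scope.
Local Open Scope ring_scope.

Section SOq3.
Variable R : realType.
Variable q : R.

Definition qnum (x : nat) : R :=
  if q == 1 then x%:R else (q ^- x - q ^+ x) / (q^-1 - q).

Definition dim (n : nat) : R := qnum (n.*2.+1).

(* supp(m . n) = { k | |m - n| <= k <= m + n } *)
Definition fsupp (m n : nat) : set nat :=
  [set k | ((m - n) + (n - m) <= k)%N /\ (k <= m + n)%N].

(* supp of the product of the irreducibles listed in s (empty product = unit 0);
   all structure constants are nonnegative, so supports simply propagate *)
Fixpoint supp_prod (s : seq nat) : set nat :=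
  match s with
  | [::] => [set 0%N]
  | x :: s' => [set k | exists2 j, supp_prod s' j & fsupp j x k]
  end.

Definition generating (X : seq nat) : Prop :=
  forall n : nat, exists s : seq nat, all (fun x => x \in X) s /\ supp_prod s n.

(* |P| = sum over P of d^2, for (finite) P, written as sup of partial sums *)
Definition wt (P : set nat) : R :=
  sup [set (\sum_(b < n | `[< P b >]) dim b ^+ 2) | n in [set: nat]].

Definition inn_boundary (X A : seq nat) : set nat :=
  [set b | b \in A /\ exists2 x, x \in X & ~ (fsupp b x `<=` [set k | k \in A])].

Definition out_boundary (X A : seq nat) : set nat :=
  [set b | b \notin A /\ exists2 x, x \in X & ~ (fsupp b x `<=` [set k | k \notin A])].

Definition boundary (X A : seq nat) : set nat := inn_boundary X A `|` out_boundary X A.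

Definition setA (A : seq nat) : set nat := [set b | b \in A].

Definition FolX_inn (X : seq nat) : R :=
  inf [set wt (inn_boundary X A) / wt (setA A) | A in [set A : seq nat | A != [::]]].

Definition FolX (X : seq nat) : R :=
  inf [set wt (boundary X A) / wt (setA A) | A in [set A : seq nat | A != [::]]].

Definition Fol_inn : R := inf [set FolX_inn X | X in generating].
Definition Fol : R := inf [set FolX X | X in generating].

End SOq3.

From mathcomp Require Import all_boot all_order all_algebra.
From mathcomp Require Import all_classical all_reals.
From mathcomp Require Import ring lra zify.
Set Implicit Arguments. Unset Strict Implicit. Unset Printing Implicit Defensive.
Import Order.TTheory GRing.Theory Num.Theory.
Local Open Scope classical_set_scope.
Local Open Scope ring_scope.

(* Write d_n = [2n+1]_q and S_N = d_0^2 + ... + d_N^2.  The identity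
   q^2 d_(n+1) = d_n + q^(2n+2) (1 + q^2) gives d_n^2 <= q^4 d_(n+1)^2, hence
   (1 - q^4) S_N <= d_N^2 by telescoping; as q^(2n) d_n <= 2n+1, the error terms
   are linear in n, so that d_N^2 <= (1 - q^4) S_N + 4 (N+1)^2, while S_N >= (N+1)^3.
   If A is finite with maximum M and x > 0 is a generator, then M lies in the inner
   boundary of A and M + x in its outer boundary, so |inner boundary| >= d_M^2 >=
   (1 - q^4) |A| and |boundary| >= d_M^2 + d_(M+1)^2 >= (q^-4 - q^4) |A|.
   For X = {1} the intervals {0, ..., N} have inner boundary {N} and boundary
   {N, N+1}, and their ratios approach these bounds up to O(1/N). *)

Section Dimension.
Variables (R : realType) (q : R).
Hypothesis q_gt0 : 0 < q.
Let q_ge0 : 0 <= q := ltW q_gt0.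

Lemma dimE n : q != 1 ->
  dim q n = ((q ^+ n.*2)^-1 / q - q ^+ n.*2 * q) / (q^-1 - q).
Proof.
by move=> q_neq1; rewrite /dim /qnum (negbTE q_neq1) exprS invfM; ring.
Qed.

Lemma subr1_sqr_neq0 : q != 1 -> 1 - q * q != 0.
Proof.
move=> q_neq1; rewrite -expr2 -(expr1n R 2) subr_sqr mulf_eq0 negb_or.
by rewrite subr_eq0 eq_sym q_neq1 gt_eqF // addr_gt0.
Qed.

Lemma dim0 : dim q 0 = 1.
Proof.
have [->|q_neq1] := eqVneq q 1; first by rewrite /dim /qnum eqxx.
rewrite dimE // expr0 invr1 !mul1r; field.
by rewrite mulNr subr1_sqr_neq0 // gt_eqF.
Qed.

Lemma dimS n : dim q n.+1 = dim q n + q ^+ n.+1.*2 + (q ^+ n.+1.*2)^-1.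
Proof.
have [q1|q_neq1] := eqVneq q 1.
  rewrite /dim /qnum q1 eqxx !expr1n invr1 doubleS -addn2 natrD; ring.
rewrite !dimE // doubleS !exprS; set a := q ^+ n.*2.
have a_neq0 : a != 0 by rewrite expf_neq0 ?gt_eqF.
by field; rewrite mulNr subr1_sqr_neq0 // a_neq0 gt_eqF.
Qed.

Lemma mulq2_dimS n : q ^+ 2 * dim q n.+1 = dim q n + q ^+ n.+1.*2 * (1 + q ^+ 2).
Proof.
have [q1|q_neq1] := eqVneq q 1.
  rewrite /dim /qnum q1 eqxx !expr1n doubleS -addn2 natrD; ring.
rewrite !dimE // doubleS !exprS; set a := q ^+ n.*2.
have a_neq0 : a != 0 by rewrite expf_neq0 ?gt_eqF.
by field; rewrite mulNr subr1_sqr_neq0 // a_neq0 gt_eqF.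
Qed.

Lemma dim_ge n : (n.*2.+1)%:R <= dim q n.
Proof.
elim: n => [|n IHn]; first by rewrite dim0.
have x_gt0 : 0 < q ^+ n.+1.*2 by rewrite exprn_gt0.
have AMGM : 2 <= q ^+ n.+1.*2 + (q ^+ n.+1.*2)^-1.
  rewrite -subr_ge0; move: x_gt0; set x := q ^+ _ => x_gt0.
  have -> : x + x^-1 - 2 = (x - 1) ^+ 2 / x by field; rewrite gt_eqF.
  exact: divr_ge0 (sqr_ge0 _) (ltW x_gt0).
rewrite dimS doubleS -addn2 natrD; lra.
Qed.

Lemma dim_gt0 n : 0 < dim q n.
Proof. exact: lt_le_trans (dim_ge n). Qed.

Lemma dim_ge0 n : 0 <= dim q n.
Proof. exact/ltW/dim_gt0. Qed.

Lemma le_dim m n : (m <= n)%N -> dim q m <= dim q n.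
Proof.
move=> /subnK <-; elim: (n - m)%N => [|k IHk] //.
rewrite addSn dimS (le_trans IHk) // -addrA lerDl.
by rewrite addr_ge0 ?invr_ge0 ?exprn_ge0.
Qed.

Lemma sqr_mulq2_dimS n :
  q ^+ 4 * dim q n.+1 ^+ 2 = (dim q n + q ^+ n.+1.*2 * (1 + q ^+ 2)) ^+ 2.
Proof. by rewrite -mulq2_dimS exprMn -exprM. Qed.

Lemma sqr_dim_le_dimS n : dim q n ^+ 2 <= q ^+ 4 * dim q n.+1 ^+ 2.
Proof.
have d_ge0 := dim_ge0 n.
have e_ge0 : 0 <= q ^+ n.+1.*2 * (1 + q ^+ 2) by rewrite mulr_ge0 ?addr_ge0 ?exprn_ge0.
by rewrite sqr_mulq2_dimS lerXn2r ?nnegrE ?addr_ge0 // lerDl.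
Qed.

Definition sqdim_sum N := \sum_(0 <= i < N.+1) dim q i ^+ 2.

Lemma sqdim_sum0 : sqdim_sum 0 = 1.
Proof. by rewrite /sqdim_sum big_nat1 dim0 expr1n. Qed.

Lemma sqdim_sumS N : sqdim_sum N.+1 = sqdim_sum N + dim q N.+1 ^+ 2.
Proof. by rewrite /sqdim_sum big_nat_recr. Qed.

Lemma sqdim_sum_ge N : (N.+1)%:R ^+ 3 <= sqdim_sum N.
Proof.
elim: N => [|N IHN]; first by rewrite sqdim_sum0 expr1n.
have : ((N.+1).*2.+1)%:R ^+ 2 <= dim q N.+1 ^+ 2.
  by rewrite lerXn2r ?nnegrE ?dim_ge ?dim_ge0.
rewrite sqdim_sumS -[N.+2]addn1 -[(N.+1).*2.+1]addn1 -muln2 !natrD natrM.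
move: IHN; set m := (N.+1)%:R; have : 0 <= m by [].
rewrite !exprS expr0; nra.
Qed.

Lemma sqdim_sum_gt0 N : 0 < sqdim_sum N.
Proof. by apply: lt_le_trans (sqdim_sum_ge N); rewrite exprn_gt0. Qed.

Lemma sqr_le_sqdim_sum N (C : R) : 0 <= C ->
  C * (N.+1)%:R ^+ 2 <= C / (N.+1)%:R * sqdim_sum N.
Proof.
move=> C_ge0; rewrite mulrAC -mulrA ler_wpM2l // ler_pdivlMr ?ltr0n //.
by rewrite -exprSr sqdim_sum_ge.
Qed.

Lemma sqr_dim_ge_sqdim_sum N : (1 - q ^+ 4) * sqdim_sum N <= dim q N ^+ 2.
Proof.
elim: N => [|N IHN].
  by rewrite sqdim_sum0 dim0 mulr1 expr1n lerBlDr lerDl exprn_ge0.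
by rewrite sqdim_sumS; have := sqr_dim_le_dimS N; lra.
Qed.

Lemma sqdim_sum_le_sqr_dim2 N :
  (q ^- 4 - q ^+ 4) * sqdim_sum N <= dim q N ^+ 2 + dim q N.+1 ^+ 2.
Proof.
have q4_gt0 : 0 < q ^+ 4 by rewrite exprn_gt0.
have -> : q ^- 4 - q ^+ 4 = (1 + q ^- 4) * (1 - q ^+ 4).
  by field; rewrite gt_eqF.
have lower := sqr_dim_ge_sqdim_sum N.
have : q ^- 4 * dim q N ^+ 2 <= dim q N.+1 ^+ 2.
  by rewrite ler_pdivrMl // sqr_dim_le_dimS.
have : 0 <= 1 + q ^- 4 by rewrite addr_ge0 ?invr_ge0 ?exprn_ge0.
move: lower; set S := sqdim_sum N; set c := 1 - q ^+ 4; nra.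
Qed.

Hypothesis q_le1 : q <= 1.

Lemma expq_dim_le n : q ^+ n.*2 * dim q n <= (n.*2.+1)%:R.
Proof.
elim: n => [|n IHn]; first by rewrite dim0 mulr1.
set x := q ^+ n.+1.*2.
have x_gt0 : 0 < x by rewrite exprn_gt0.
have x_le1 : x <= 1 by exact: exprn_ile1 q_ge0 q_le1.
have xd_le : x * dim q n <= q ^+ n.*2 * dim q n.
  apply: ler_wpM2r; first exact: dim_ge0.
  by rewrite /x; apply: (ler_wiXn2l q_ge0 q_le1); rewrite leq_double.
have xx_le1 : x * x <= 1 := mulr_ile1 (ltW x_gt0) (ltW x_gt0) x_le1 x_le1.
rewrite dimS -/x !mulrDr mulfV ?gt_eqF // doubleS -addn2 natrD; lra.
Qed.

Lemma sqr_dimS_le n : q ^+ 4 * dim q n.+1 ^+ 2 <= dim q n ^+ 2 + 8 * (n.+1)%:R.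
Proof.
have qd_le := expq_dim_le n; have d_gt0 := dim_gt0 n.
have -> : 8 * (n.+1)%:R = 4 * (n.*2.+1)%:R + 4 :> R.
  by rewrite -!natrM -natrD; congr _%:R; lia.
rewrite sqr_mulq2_dimS doubleS -addn2 exprD.
move: qd_le d_gt0; set t := q ^+ n.*2; set p := q ^+ 2; set d := dim q n.
set m := (n.*2.+1)%:R => qd_le d_gt0.
have [p_ge0 p_le1] : 0 <= p /\ p <= 1 by rewrite exprn_ge0 ?exprn_ile1.
have [t_ge0 t_le1] : 0 <= t /\ t <= 1 by rewrite exprn_ge0 ?exprn_ile1.
clearbody t p d m.
have e_ge0 : 0 <= t * p * (1 + p) by rewrite !mulr_ge0 ?addr_ge0.
have pp_le2 : p * (1 + p) <= 2 by nra.
have e_le2 : t * p * (1 + p) <= 2 by nra.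
have ed_le : t * p * (1 + p) * d <= 2 * m.
  have td_ge0 : 0 <= t * d := mulr_ge0 t_ge0 (ltW d_gt0).
  have -> : t * p * (1 + p) * d = p * (1 + p) * (t * d) by ring.
  nra.
nra.
Qed.

Lemma sqr_dim_le_sqdim_sum N :
  dim q N ^+ 2 <= (1 - q ^+ 4) * sqdim_sum N + 4 * (N.+1)%:R ^+ 2.
Proof.
elim: N => [|N IHN].
  rewrite sqdim_sum0 dim0 expr1n mulr1.
  have : q ^+ 4 <= 1 by rewrite exprn_ile1.
  lra.
rewrite sqdim_sumS -[N.+2]addn1 natrD; have := sqr_dimS_le N.
move: IHN; set m := (N.+1)%:R; rewrite !expr2; nra.
Qed.

Lemma sqr_dim2_le_sqdim_sum N :
  dim q N ^+ 2 + dim q N.+1 ^+ 2 <=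
  (q ^- 4 - q ^+ 4) * sqdim_sum N + (4 + 12 * q ^- 4) * (N.+1)%:R ^+ 2.
Proof.
have q4_gt0 : 0 < q ^+ 4 by rewrite exprn_gt0.
have upper := sqr_dim_le_sqdim_sum N.
have step : dim q N.+1 ^+ 2 <= q ^- 4 * (dim q N ^+ 2 + 8 * (N.+1)%:R).
  by rewrite -(ler_pM2l q4_gt0) [leRHS]mulrA mulfV ?gt_eqF // mul1r sqr_dimS_le.
have r_ge0 : 0 <= q ^- 4 by rewrite invr_ge0 exprn_ge0.
have rq4 : q ^- 4 * q ^+ 4 = 1 by rewrite mulVf ?gt_eqF.
have m_ge1 : 1 <= (N.+1)%:R :> R by rewrite ler1n.
have r_upper := ler_wpM2l r_ge0 upper.
move: upper step r_upper rq4 m_ge1; set S := sqdim_sum N; set m := (N.+1)%:R.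
set r := q ^- 4; set q4 := q ^+ 4 => upper step r_upper rq4 m_ge1.
have rqS : r * (q4 * S) = S by rewrite mulrA rq4 mul1r.
have m_le : r * m <= r * m ^+ 2.
  by rewrite ler_wpM2l // expr2 ler_peMl // (le_trans ler01 m_ge1).
lra.
Qed.

End Dimension.

Lemma ler_sum_subpred (R : numDomainType) (I : Type) (r : seq I) (P Q : pred I)
    (F : I -> R) :
  (forall i, 0 <= F i) -> subpred P Q ->
  \sum_(i <- r | P i) F i <= \sum_(i <- r | Q i) F i.
Proof.
move=> F_ge0 PQ; rewrite [leLHS]big_mkcond [leRHS]big_mkcond ler_sum // => i _.
by case: (boolP (P i)) => [/PQ -> //|_]; case: (Q i).
Qed.

Section Weight.
Variables (R : realType) (q : R).

Lemma wt_sum (P : set nat) n : (forall b, P b -> (b < n)%N) ->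
  wt q P = \sum_(b < n | `[< P b >]) dim q b ^+ 2.
Proof.
move=> P_lt; set T := \sum_(b < n | _) _.
have T_ub : ubound [set (\sum_(b < m | `[< P b >]) dim q b ^+ 2) | m in [set: nat]] T.
  move=> _ [m _ <-]; set k := maxn m n.
  rewrite (big_ord_widen_cond k (fun b => `[< P b >]) (fun b => dim q b ^+ 2)) ?leq_maxl //.
  rewrite /T (big_ord_widen_cond k (fun b => `[< P b >]) (fun b => dim q b ^+ 2)) ?leq_maxr //.
  apply: ler_sum_subpred => [i|i /andP [/asboolP Pi _]]; first exact: sqr_ge0.
  by rewrite asboolT // P_lt.
apply/eqP; rewrite eq_le; apply/andP; split.
  by apply: ge_sup => //; exists T, n.
by apply: ub_le_sup; [exists T | exists n].
Qed.

Lemma wt_le (P Q : set nat) n : P `<=` Q -> (forall b, Q b -> (b < n)%N) ->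
  wt q P <= wt q Q.
Proof.
move=> PQ Q_lt; rewrite (wt_sum Q_lt) (@wt_sum _ n) => [|b /PQ]; last exact: Q_lt.
apply: ler_sum_subpred => [i|i /asboolP /PQ Qi]; first exact: sqr_ge0.
exact/asboolP.
Qed.

Lemma wt_setA (s : seq nat) : uniq s -> wt q (setA s) = \sum_(b <- s) dim q b ^+ 2.
Proof.
move=> s_uniq; set n := (\max_(b <- s) b)%N.+1.
have s_lt b : b \in s -> (b < n)%N by move=> bs; rewrite ltnS (leq_bigmax_seq _ bs).
rewrite (wt_sum s_lt); under eq_bigl do rewrite asboolb.
rewrite -(big_mkord (fun b => b \in s) (fun b => dim q b ^+ 2)) -big_filter.
apply/perm_big/uniq_perm; rewrite ?filter_uniq ?iota_uniq // => b.
by rewrite mem_filter mem_index_iota andb_idr // => /s_lt.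
Qed.

Lemma wt_setA_iota N : wt q (setA (iota 0 N.+1)) = sqdim_sum q N.
Proof. exact: wt_setA (iota_uniq 0 N.+1). Qed.

Lemma sqr_dim_wt_le (P : set nat) n b : P b -> (forall b, P b -> (b < n)%N) ->
  dim q b ^+ 2 <= wt q P.
Proof.
move=> Pb P_lt; have -> : dim q b ^+ 2 = \sum_(c <- [:: b]) dim q c ^+ 2.
  by rewrite big_seq1.
rewrite -wt_setA //.
by apply: wt_le P_lt => c; rewrite /setA /mkset inE => /eqP ->.
Qed.

Lemma wt_setA_le_sqdim_sum (A : seq nat) :
  wt q (setA A) <= sqdim_sum q (\max_(a <- A) a)%N.
Proof.
rewrite -wt_setA_iota.
apply: (wt_le (n := (\max_(a <- A) a).+1)) => b; rewrite /setA /mkset mem_iota //.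
by move=> bA; rewrite ltnS leq_bigmax_seq.
Qed.

End Weight.

Lemma bigmaxn_seq_mem (s : seq nat) : s != [::] -> (\max_(i <- s) i)%N \in s.
Proof.
elim: s => [//|a s IHs] _; rewrite big_cons inE.
have [->|s_neq0] := eqVneq s [::]; first by rewrite big_nil maxn0 eqxx.
have := IHs s_neq0; case: leqP => [_ ->|_]; by rewrite ?orbT ?eqxx.
Qed.

Lemma supp_prod_zeros (s : seq nat) k :
  all (pred1 0%N) s -> supp_prod s k -> k = 0%N.
Proof.
elim: s k => [k _ -> //|x s IHs k] /= /andP [/eqP -> s0] [j /(IHs _ s0) ->].
by rewrite /fsupp /=; lia.
Qed.

Lemma generating_pos (X : seq nat) : generating X -> exists2 x, x \in X & (0 < x)%N.
Proof.
move=> X_gen; apply/hasP; apply: contraT => /hasPn X0.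
have [s [sX /supp_prod_zeros s1]] := X_gen 1%N.
suff /s1 : all (pred1 0%N) s by [].
by apply/allP => x /(allP sX) /X0; rewrite lt0n negbK.
Qed.

Lemma generating1 : generating [:: 1%N].
Proof.
move=> n; exists (nseq n 1%N); split; first by rewrite all_nseq orbT.
by elim: n => [//|n IHn] /=; exists n => //; rewrite /fsupp /=; lia.
Qed.

Section MaxBoundary.
Variables (X A : seq nat) (x : nat).
Hypotheses (A_neq0 : A != [::]) (xX : x \in X) (x_gt0 : (0 < x)%N).
Let M := (\max_(a <- A) a)%N.
Let MA : M \in A := bigmaxn_seq_mem A_neq0.
Let le_max a : a \in A -> (a <= M)%N := fun aA => leq_bigmax_seq _ aA isT.

Lemma max_inn_boundary : inn_boundary X A M.
Proof.
split => //; exists x => // /(_ (M + x)%N) MxA.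
have : (M + x)%N \in A by apply: MxA; rewrite /fsupp /=; lia.
by move/le_max; lia.
Qed.

Lemma max_addn_out_boundary : out_boundary X A (M + x).
Proof.
split; first by apply/negP => /le_max; lia.
exists x => // /(_ M) MnA.
suff : M \notin A by rewrite MA.
by apply: MnA; rewrite /fsupp /=; lia.
Qed.

End MaxBoundary.

Lemma boundary_le (X A : seq nat) b : boundary X A b ->
  (b <= (\max_(a <- A) a) + (\max_(x <- X) x))%N.
Proof.
have le_max (s : seq nat) a : a \in s -> (a <= \max_(i <- s) i)%N.
  by move=> aA; apply: leq_bigmax_seq.
case=> [[/le_max] | [_ [y /le_max y_le notsub]]]; first lia.
apply: contra_notP notsub => /negP b_gt k [k_ge _].
by rewrite /mkset; apply/negP => /le_max; lia.
Qed.

Lemma inn_boundary1_iota N : inn_boundary [:: 1%N] (iota 0 N.+1) `<=` setA [:: N].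
Proof.
move=> b [+ [_ /[!inE] /eqP -> notsub]]; rewrite mem_iota /setA /= inE => b_le.
apply/eqP; apply: contra_notP notsub => b_neq k [k_ge k_le].
by rewrite /mkset mem_iota; lia.
Qed.

Lemma boundary1_iota N : boundary [:: 1%N] (iota 0 N.+1) `<=` setA [:: N; N.+1].
Proof.
move=> b [/inn_boundary1_iota | [+ [_ /[!inE] /eqP -> notsub]]].
  by rewrite /setA /= !inE => ->.
rewrite mem_iota /setA /= !inE => b_gt.
apply/orP; right; apply/eqP; apply: contra_notP notsub => b_neq k [k_ge k_le].
by rewrite /mkset mem_iota; lia.
Qed.

Section Ratio.
Variables (R : realType) (q : R).
Hypotheses (q_gt0 : 0 < q) (q_le1 : q <= 1).
Let q_ge0 : 0 <= q := ltW q_gt0.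

Lemma wt_setA_gt0 (A : seq nat) : A != [::] -> 0 < wt q (setA A).
Proof.
move=> A_neq0; set M := (\max_(a <- A) a)%N.
apply: lt_le_trans (sqr_dim_wt_le q (n := M.+1) (bigmaxn_seq_mem A_neq0) _).
  by rewrite exprn_gt0 ?dim_gt0.
by move=> b bA; rewrite ltnS leq_bigmax_seq.
Qed.

Lemma inn_ratio_ge (X A : seq nat) : generating X -> A != [::] ->
  1 - q ^+ 4 <= wt q (inn_boundary X A) / wt q (setA A).
Proof.
move=> X_gen A_neq0; have [x xX x_gt0] := generating_pos X_gen.
set M := (\max_(a <- A) a)%N.
have q4_le1 : q ^+ 4 <= 1 by rewrite exprn_ile1.
rewrite ler_pdivlMr ?wt_setA_gt0 //.
apply: le_trans (ler_wpM2l _ (wt_setA_le_sqdim_sum q A)) _; first by rewrite subr_ge0.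
apply: le_trans (sqr_dim_ge_sqdim_sum q_gt0 M) _.
apply: (sqr_dim_wt_le q (n := M.+1) (max_inn_boundary A_neq0 xX x_gt0)).
by move=> b [bA _]; rewrite ltnS leq_bigmax_seq.
Qed.

Lemma ratio_ge (X A : seq nat) : generating X -> A != [::] ->
  q ^- 4 - q ^+ 4 <= wt q (boundary X A) / wt q (setA A).
Proof.
move=> X_gen A_neq0; have [x xX x_gt0] := generating_pos X_gen.
set M := (\max_(a <- A) a)%N.
have c_ge0 : 0 <= q ^- 4 - q ^+ 4.
  rewrite subr_ge0 (@le_trans _ _ 1) ?exprn_ile1 //.
  by rewrite invf_ge1 ?exprn_gt0 ?exprn_ile1.
rewrite ler_pdivlMr ?wt_setA_gt0 //.
apply: le_trans (ler_wpM2l c_ge0 (wt_setA_le_sqdim_sum q A)) _.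
apply: le_trans (sqdim_sum_le_sqr_dim2 q_gt0 M) _.
have dim_le : dim q M.+1 ^+ 2 <= dim q (M + x) ^+ 2.
  by rewrite lerXn2r ?nnegrE ?dim_ge0 ?le_dim // -addn1 leq_add2l.
apply: le_trans (lerD (lexx _) dim_le) _.
have -> : dim q M ^+ 2 + dim q (M + x) ^+ 2 = \sum_(b <- [:: M; M + x]) dim q b ^+ 2.
  by rewrite big_cons big_seq1.
rewrite -wt_setA /= ?inE ?andbT; last lia.
apply: (wt_le q (n := (M + \max_(y <- X) y).+1)) => b.
  rewrite /setA /mkset !inE => /orP [] /eqP ->.
    exact/subsetUl/(max_inn_boundary A_neq0 xX x_gt0).
  exact/subsetUr/(max_addn_out_boundary A_neq0 xX x_gt0).
by move/boundary_le; rewrite ltnS.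
Qed.

Lemma inn_ratio_iota_le N :
  wt q (inn_boundary [:: 1%N] (iota 0 N.+1)) / wt q (setA (iota 0 N.+1)) <=
  1 - q ^+ 4 + 4 / (N.+1)%:R.
Proof.
rewrite wt_setA_iota ler_pdivrMr ?sqdim_sum_gt0 // mulrDl.
apply: le_trans (wt_le q (n := N.+1) (inn_boundary1_iota (N := N)) _) _.
  by move=> b; rewrite /setA /mkset inE => /eqP ->.
rewrite wt_setA // big_seq1.
apply: le_trans (sqr_dim_le_sqdim_sum q_gt0 q_le1 N) _.
by rewrite lerD2l sqr_le_sqdim_sum.
Qed.

Lemma ratio_iota_le N :
  wt q (boundary [:: 1%N] (iota 0 N.+1)) / wt q (setA (iota 0 N.+1)) <=
  q ^- 4 - q ^+ 4 + (4 + 12 * q ^- 4) / (N.+1)%:R.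
Proof.
rewrite wt_setA_iota ler_pdivrMr ?sqdim_sum_gt0 // mulrDl.
apply: le_trans (wt_le q (n := N.+2) (boundary1_iota (N := N)) _) _.
  by move=> b; rewrite /setA /mkset !inE => /orP [] /eqP ->.
rewrite wt_setA /= ?inE ?andbT ?neq_ltn ?ltnSn // big_cons big_seq1.
apply: le_trans (sqr_dim2_le_sqdim_sum q_gt0 q_le1 N) _.
by rewrite lerD2l sqr_le_sqdim_sum // addr_ge0 ?mulr_ge0 ?invr_ge0 ?exprn_ge0.
Qed.

End Ratio.

Lemma inf_eq_approx (R : realType) (E : set R) (c C : R) (e : nat -> R) :
  lbound E c -> (forall N, E (e N)) -> (forall N, e N <= c + C / (N.+1)%:R) ->
  inf E = c.
Proof.
move=> c_lb eE e_le; have E_lb : has_lbound E by exists c.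
apply/eqP; rewrite eq_le lb_le_inf ?andbT //; last by exists (e 0%N).
have C_ge0 : 0 <= C by have := e_le 0%N; have := c_lb _ (eE 0%N); rewrite divr1; lra.
apply/ler_addgt0Pr => eps eps_gt0; set N := Num.truncn (C / eps).
apply: le_trans (ge_inf E_lb (eE N)) _; apply: le_trans (e_le N) _.
rewrite lerD2l ler_pdivrMr // mulrC -ler_pdivrMr //.
exact/ltW/truncnS_gt.
Qed.

Lemma inf_inf_eq (R : realType) (I J : Type) (SI : set I) (SJ : set J)
    (f : I -> J -> R) (c C : R) (i0 : I) (a : nat -> J) :
  SI i0 -> (forall N, SJ (a N)) ->
  (forall i j, SI i -> SJ j -> c <= f i j) ->
  (forall N, f i0 (a N) <= c + C / (N.+1)%:R) ->
  inf [set inf [set f i j | j in SJ] | i in SI] = c.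
Proof.
move=> SIi0 SJa f_ge f_le.
have inner_ge i : SI i -> c <= inf [set f i j | j in SJ].
  move=> SIi; apply: lb_le_inf => [|_ [j SJj <-]]; last exact: f_ge.
  by exists (f i (a 0%N)), (a 0%N).
have inner0 : inf [set f i0 j | j in SJ] = c.
  apply: (inf_eq_approx (e := fun N => f i0 (a N))) f_le => [_ [j SJj <-]|N].
    exact: f_ge.
  by exists (a N).
apply: (inf_eq_approx (C := 0) (e := fun=> inf [set f i0 j | j in SJ])).
- by move=> _ [i SIi <-]; apply: inner_ge.
- by move=> N; exists i0.
- by move=> N; rewrite inner0 mul0r addr0.
Qed.

Theorem proposition5p3 (R : realType) (q : R) (hq0 : 0 < q) (hq1 : q <= 1) :
  Fol_inn q = 1 - q ^+ 4 /\ Fol q = q ^- 4 - q ^+ 4.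
Proof.
split.
- apply: (inf_inf_eq (i0 := [:: 1%N]) (a := fun N => iota 0 N.+1)) => //.
  + exact: generating1.
  + by move=> X A X_gen; apply: inn_ratio_ge.
  + exact: inn_ratio_iota_le.
- apply: (inf_inf_eq (i0 := [:: 1%N]) (a := fun N => iota 0 N.+1)) => //.
  + exact: generating1.
  + by move=> X A X_gen; apply: ratio_ge.
  + exact: ratio_iota_le.
Qed.
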